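(* Let $n$, $r$, $a$ be positive integers with $n=2r+1$ and $a\ge 2$. Then $$\rho_2(K(n+2a,r+a))\ \ge\ 2^{\lfloor a/2\rfloor}\,\rho_2(K(n,r)).$$
   Context: For integers $n\ge 2r$, the Kneser graph $K(n,r)$ has as vertices the $r$-element subsets of $[n]=\{1,\dots,n\}$, two vertices being adjacent iff they are disjoint. A $2$-packing of a graph $G$ is a set of vertices pairwise at distance at least $3$ in $G$; $\rho_2(G)$ is the maximum cardinality of a $2$-packing. *)

From mathcomp Require Import all_boot all_order.
Set Implicit Arguments. Unset Strict Implicit. Unset Printing Implicit Defensive.

Definition kvertex (n r : nat) (A : {set 'I_n}) : bool := #|A| == r.

Definition kadj (n r : nat) (A B : {set 'I_n}) : bool :=
  [&& kvertex r A, kvertex r B & [disjoint A & B]].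

(* dist(A,B) >= 3 in K(n,r) for vertices A, B: A <> B, A, B not adjacent,
   and no common neighbour (i.e. no path of length 0, 1 or 2). *)
Definition kdist_ge3 (n r : nat) (A B : {set 'I_n}) : bool :=
  [&& A != B, ~~ kadj r A B &
      ~~ [exists C : {set 'I_n}, kadj r A C && kadj r C B]].

Definition is_2packing (n r : nat) (P : {set {set 'I_n}}) : bool :=
  [forall A in P, kvertex r A] &&
  [forall A in P, forall B in P, (A != B) ==> kdist_ge3 r A B].

Definition rho2 (n r : nat) : nat :=
  \max_(P : {set {set 'I_n}} | is_2packing r P) #|P|.

(* In the odd Kneser graph K(2k+1, k) the complement of the union of two
   vertices X, Y has |X :&: Y| + 1 points, and every common neighbour lies in
   it; so X and Y are at distance at least 3 exactly when
   1 <= |X :&: Y| <= k - 2.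
   Add a new pairs of points to [n] and extend each vertex A of a 2-packing of
   K(n, r) by a binary word f of length a, taking point f_j of the j-th pair.
   Two extended vertices meet in |A :&: B| points plus one per position where
   their words agree, so if the words range over a code of minimum Hamming
   distance 2 (and r > 0), all these intersections stay in [1, r + a - 2].
   Repeating each of a/2 free bits twice gives such a code with 2^(a/2)
   words. *)

From mathcomp Require Import all_boot all_order zify.
Set Implicit Arguments. Unset Strict Implicit.

Lemma exists_subset_card (T : finType) (X : {set T}) k :
  k <= #|X| -> exists2 C : {set T}, C \subset X & #|C| = k.
Proof.
move=> le_k; exists [set x in take k (enum X)].
  by apply/subsetP=> x; rewrite inE => /mem_take; rewrite mem_enum.
rewrite cardsE (card_uniqP _) ?take_uniq ?enum_uniq //.
by rewrite size_takel // -cardE.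
Qed.

Section KneserDistance.

Variables N k : nat.
Implicit Types X Y C : {set 'I_N}.

Lemma kadjE X Y : kvertex k X -> kvertex k Y -> kadj k X Y = [disjoint X & Y].
Proof. by rewrite /kadj => -> ->. Qed.

Lemma kcommon_neighbourE X Y : kvertex k X -> kvertex k Y ->
  [exists C, kadj k X C && kadj k C Y] = (k <= #|~: (X :|: Y)|).
Proof.
move=> vX vY; rewrite setCU; apply/existsP/idP => [[C] | ].
  case/andP=> /and3P[_ /eqP cardC XC] /and3P[_ _ CY].
  by rewrite -cardC subset_leq_card // subsetI -!disjoints_subset disjoint_sym XC.
case/exists_subset_card=> C; rewrite subsetI -!disjoints_subset => /andP[CX CY] cardC.
by exists C; rewrite /kadj vX vY /kvertex cardC eqxx CY disjoint_sym CX.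
Qed.

Lemma kdist_ge3E X Y : kvertex k X -> kvertex k Y ->
  kdist_ge3 k X Y = [&& X != Y, X :&: Y != set0 & #|~: (X :|: Y)| < k].
Proof.
by move=> vX vY; rewrite /kdist_ge3 kadjE // kcommon_neighbourE // setI_eq0 -ltnNge.
Qed.

Hypothesis N_odd : N = 2 * k + 1.

Lemma card_setCU_odd X Y : #|X| = k -> #|Y| = k -> #|~: (X :|: Y)| = #|X :&: Y|.+1.
Proof. by have := cardsC (X :|: Y); have := cardsUI X Y; rewrite card_ord; lia. Qed.

Lemma kdist_ge3_odd X Y : #|X| = k -> #|Y| = k ->
  kdist_ge3 k X Y = (0 < #|X :&: Y|) && (#|X :&: Y| + 2 <= k).
Proof.
move=> cardX cardY; rewrite kdist_ge3E ?/kvertex ?cardX ?cardY //.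
rewrite card_setCU_odd // -cards_eq0 -lt0n addn2.
by case: eqP => [-> | _] //=; rewrite setIid cardY [k.+1 < k]ltnNge leqnSn andbF.
Qed.

End KneserDistance.

Lemma is_2packingP N k (P : {set {set 'I_N}}) :
  reflect ({in P, forall A, kvertex k A} /\
           {in P &, forall A B, A != B -> kdist_ge3 k A B})
          (is_2packing k P).
Proof.
apply: (iffP andP) => [[/forall_inP vP /forall_inP dP] | [vP dP]].
  by split=> // A B /dP/forall_inP dA /dA/implyP.
split; apply/forall_inP => // A AP; apply/forall_inP => B BP.
exact/implyP/dP.
Qed.

Lemma rho2_ge N k (P : {set {set 'I_N}}) : is_2packing k P -> #|P| <= rho2 N k.
Proof. exact: leq_bigmax_cond. Qed.

Lemma rho2_witness N k :
  exists2 P : {set {set 'I_N}}, is_2packing k P & rho2 N k = #|P|.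
Proof.
have packings_gt0 : 0 < #|[pred P : {set {set 'I_N}} | is_2packing k P]|.
  by apply/card_gt0P; exists set0; apply/is_2packingP; split=> A; rewrite inE.
by have [P] := eq_bigmax_cond (fun P : {set {set 'I_N}} => #|P|) packings_gt0; exists P.
Qed.

Section Lifting.

Variables n a : nat.
Implicit Types (A B : {set 'I_n}) (f g : {ffun 'I_a -> bool}).

Lemma new_point_subproof (j : 'I_a) (b : bool) : b + j.*2 < 2 * a.
Proof. by have := ltn_ord j; case: b => /=; lia. Qed.

Definition new_point (j : 'I_a) (b : bool) : 'I_(n + 2 * a) :=
  rshift n (Ordinal (new_point_subproof j b)).

Lemma eq_new_point j b j' b' :
  (new_point j b == new_point j' b') = (j == j') && (b == b').
Proof.
rewrite eq_rshift; apply/eqP/andP => [/(congr1 val) /= E | [/eqP-> /eqP->] //].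
split; apply/eqP; first apply/val_inj.
  by have := congr1 half E; rewrite !half_bit_double.
by have := congr1 odd E; rewrite !oddD !odd_double !oddb !addbF.
Qed.

Variant lift_point_spec : 'I_(n + 2 * a) -> Type :=
  | OldPoint i : lift_point_spec (lshift (2 * a) i)
  | NewPoint j b : lift_point_spec (new_point j b).

Lemma lift_pointP x : lift_point_spec x.
Proof.
case: (splitP x) => [i x_eq | k x_eq].
  have -> : x = lshift (2 * a) i by apply/val_inj.
  exact: OldPoint.
have j_lt : k./2 < a by have := ltn_ord k; lia.
have -> : x = new_point (Ordinal j_lt) (odd k).
  by apply/val_inj => /=; rewrite x_eq odd_double_half.
exact: NewPoint.
Qed.

Definition word_set f : {set 'I_(n + 2 * a)} := [set new_point j (f j) | j : 'I_a].

Definition lift_vertex A f := lshift (2 * a) @: A :|: word_set f.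

Lemma old_point_in_word f i : (lshift (2 * a) i \in word_set f) = false.
Proof. by apply/imsetP => -[j _ /eqP]; rewrite eq_lrshift. Qed.

Lemma new_point_in_word f j b : (new_point j b \in word_set f) = (f j == b).
Proof.
apply/imsetP/eqP => [[j' _ /eqP] | <-]; last by exists j.
by rewrite eq_new_point => /andP[/eqP-> /eqP->].
Qed.

Lemma new_point_in_old (X : {set 'I_n}) j b :
  (new_point j b \in lshift (2 * a) @: X) = false.
Proof. by apply/imsetP => -[i _ /eqP]; rewrite eq_sym eq_lrshift. Qed.

Lemma old_point_in_old (X : {set 'I_n}) i :
  (lshift (2 * a) i \in lshift (2 * a) @: X) = (i \in X).
Proof. exact/mem_imset/lshift_inj. Qed.

Definition lift_pointE :=
  (old_point_in_word, new_point_in_word, new_point_in_old, old_point_in_old).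

Lemma lift_vertex_inj : injective (uncurry lift_vertex).
Proof.
move=> [A f] [B g] /= E; have memE x : (x \in lift_vertex A f) = (x \in lift_vertex B g).
  by rewrite E.
congr pair; [apply/setP => i | apply/ffunP => j].
  by have := memE (lshift _ i); rewrite !inE !lift_pointE !orbF.
by have := memE (new_point j (f j)); rewrite !inE !lift_pointE eqxx => /esym/eqP.
Qed.

Lemma card_word_setI f g : #|word_set f :&: word_set g| = #|[set j | f j == g j]|.
Proof.
have -> : word_set f :&: word_set g = [set new_point j (f j) | j in [set j | f j == g j]].
  apply/setP => x; rewrite inE; apply/andP/imsetP => [[/imsetP[j _ ->]] | [j]].
    by rewrite new_point_in_word => gf; exists j; rewrite // inE eq_sym.
  by rewrite inE => /eqP fg ->; rewrite !new_point_in_word fg.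
by apply: card_imset => j j' /eqP; rewrite eq_new_point => /andP[/eqP].
Qed.

Lemma card_lift_vertexI A B f g :
  #|lift_vertex A f :&: lift_vertex B g| = #|A :&: B| + #|[set j | f j == g j]|.
Proof.
have -> : lift_vertex A f :&: lift_vertex B g =
          lshift (2 * a) @: (A :&: B) :|: word_set f :&: word_set g.
  by apply/setP => x; case: (lift_pointP x) => *; rewrite !inE !lift_pointE /= ?inE ?orbF.
rewrite cardsU card_imset ?card_word_setI; last exact: lshift_inj.
suff -> : lshift (2 * a) @: (A :&: B) :&: (word_set f :&: word_set g) = set0.
  by rewrite cards0 subn0.
by apply/setP => x; case: (lift_pointP x) => *; rewrite !inE !lift_pointE ?andbF.
Qed.

Lemma card_lift_vertex A f : #|lift_vertex A f| = #|A| + a.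
Proof.
rewrite -[lift_vertex A f]setIid card_lift_vertexI setIid -[in RHS](card_ord a).
by congr (_ + _); apply: eq_card => j; rewrite !inE eqxx.
Qed.

End Lifting.

Definition hamming a (f g : {ffun 'I_a -> bool}) := #|[set j | f j != g j]|.

Lemma card_agree_hamming a (f g : {ffun 'I_a -> bool}) :
  #|[set j | f j == g j]| + hamming f g = a.
Proof.
rewrite -[RHS](card_ord a) -(cardsC [set j | f j == g j]); congr (_ + _).
by apply: eq_card => j; rewrite !inE.
Qed.

Definition lift_family n a (P : {set {set 'I_n}}) (C : {set {ffun 'I_a -> bool}}) :=
  [set lift_vertex A f | A in P, f in C].

Lemma card_lift_family n a (P : {set {set 'I_n}}) (C : {set {ffun 'I_a -> bool}}) :
  #|lift_family P C| = #|P| * #|C|.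
Proof.
by rewrite /lift_family curry_imset2X card_imset ?cardsX //; apply: lift_vertex_inj.
Qed.

Lemma lift_family_2packing n r a
    (P : {set {set 'I_n}}) (C : {set {ffun 'I_a -> bool}}) :
  n = 2 * r + 1 -> 0 < r -> is_2packing r P ->
  {in C &, forall f g, f != g -> 1 < hamming f g} ->
  is_2packing (r + a) (lift_family P C).
Proof.
move=> n_odd r_gt0 /is_2packingP[vP dP] dC.
have cardP A : A \in P -> #|A| = r by move/vP/eqP.
have card_lift (f : {ffun 'I_a -> bool}) A : A \in P -> #|lift_vertex A f| = r + a.
  by move=> AP; rewrite card_lift_vertex cardP.
have lift_odd : n + 2 * a = 2 * (r + a) + 1 by lia.
apply/is_2packingP; split=> [X /imset2P[A f AP _ ->] | X Y /imset2P[A f AP fC ->]].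
  by rewrite /kvertex card_lift.
case/imset2P=> B g BP gC -> neq.
rewrite (kdist_ge3_odd lift_odd (card_lift f A AP) (card_lift g B BP)) card_lift_vertexI.
have := card_agree_hamming f g; case: (eqVneq A B) => [eqAB | neqAB].
  have /(dC f g fC gC) : f != g by apply: contraNneq neq => <-; rewrite eqAB.
  by rewrite -eqAB setIid cardP //; lia.
have := dP A B AP BP neqAB; rewrite (kdist_ge3_odd n_odd (cardP A AP) (cardP B BP)).
lia.
Qed.

Section DoubledCode.

Variables m a : nat.
Hypothesis m_double_le : m.*2 <= a.
Implicit Types e : {ffun 'I_m -> bool}.

Definition double_word e : {ffun 'I_a -> bool} :=
  [ffun j : 'I_a => nth false (fgraph e) j./2].

Lemma double_wordE e (j : 'I_a) (i : 'I_m) : j./2 = i -> double_word e j = e i.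
Proof. by move=> j_half; rewrite ffunE j_half nth_fgraph_ord. Qed.

Lemma double_word_dist e e' : e != e' -> 1 < hamming (double_word e) (double_word e').
Proof.
move=> neq; have [i ei] : exists i, e i != e' i.
  apply/existsP; apply: contraNT neq => /existsPn eq_ee'.
  by apply/eqP/ffunP => i; apply/eqP/negPn/eq_ee'.
have i_lt := ltn_ord i.
have j0_lt : i.*2 < a by lia.
have j1_lt : i.*2.+1 < a by lia.
have j0_half : (Ordinal j0_lt)./2 = i by rewrite /= doubleK.
have j1_half : (Ordinal j1_lt)./2 = i by rewrite /= uphalf_double.
apply/card_gt1P; exists (Ordinal j0_lt), (Ordinal j1_lt); rewrite !inE.
rewrite !(double_wordE _ j0_half) !(double_wordE _ j1_half) ei; split=> //.
by apply/eqP => /(congr1 val) /=; lia.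
Qed.

Definition double_code : {set {ffun 'I_a -> bool}} :=
  [set double_word e | e : {ffun 'I_m -> bool}].

Lemma card_double_code : #|double_code| = 2 ^ m.
Proof.
rewrite card_imset ?cardsT ?card_ffun ?card_bool ?card_ord // => e e' eq_word.
apply/eqP/negPn/negP => /double_word_dist; rewrite eq_word.
by case/card_gt1P=> j [_ [+ _ _]]; rewrite inE eqxx.
Qed.

Lemma double_code_dist : {in double_code &, forall f g, f != g -> 1 < hamming f g}.
Proof.
move=> _ _ /imsetP[e _ ->] /imsetP[e' _ ->] neq.
by apply: double_word_dist; apply: contraNneq neq => ->.
Qed.

End DoubledCode.

Theorem corollary4p4 (n r a : nat) :
  0 < n -> 0 < r -> 0 < a -> n = 2 * r + 1 -> 2 <= a ->
  2 ^ (a./2) * rho2 n r <= rho2 (n + 2 * a) (r + a).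
Proof.
move=> _ r_gt0 _ n_odd _.
have [P P_packing ->] := rho2_witness n r.
have half_double_le : (a./2).*2 <= a by rewrite -[leqRHS]odd_double_half leq_addl.
rewrite -(card_double_code half_double_le) mulnC -card_lift_family.
apply/rho2_ge/lift_family_2packing => //.
exact: double_code_dist.
Qed.
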